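(* Assume the genus expansion hypothesis (H$_G$). Let $\alpha\in U$ and $\xi>0$, and set $\gamma=\alpha^{\nu-1}/\xi$. Then for every integer $m\ge0$ there is a constant $K_{5,m}(\alpha,\gamma)$ such that, for all sufficiently large $n$, $$\Big|x_{n,\frac n\alpha,\frac{n^{\nu-1}}{\xi}}-\alpha\sum_{g=0}^m\frac{Z_g(\gamma n^{\nu-1})}{n^{2g}}\Big|<\frac{K_{5,m}(\alpha,\gamma)}{n^{2m+2+\frac{\nu-1}{\nu}}}.$$
   Context: Fix an integer $\nu\ge2$. For $N,r>0$ let $w_{N,r}(\lambda)=\exp[-N(\lambda^2/2+r\lambda^{2\nu}/(2\nu))]$, and let $x_{n,N,r}=b_n^2$ be the recurrence coefficients of the monic orthogonal polynomials: $\lambda\pi_n=\pi_{n+1}+b_n^2\pi_{n-1}$. Let $c_\nu=\binom{2\nu-1}{\nu-1}$. For $y\ge0$ let $Z_0(y)$ be the unique root in $(0,1]$ of $1=Z+c_\nu yZ^\nu$. For $g\ge1$ set $$Z_g(y)=\frac{Z_0(y)(Z_0(y)-1)P_{3g-2,\nu}(Z_0(y))}{(\nu-(\nu-1)Z_0(y))^{5g-1}},$$ where the $P_{3g-2,\nu}$ are fixed real polynomials of degree $3g-2$ (these are the generating functions for $2\nu$-valent 2-legged genus-$g$ maps). For fixed $\gamma>0$, $Z_g(\gamma n^{\nu-1})$ has a convergent expansion $\sum_{i\ge\nu-1}a_{i,g,\nu}(\gamma)n^{-i/\nu}$ for large $n$; in particular $Z_g(\gamma n^{\nu-1})=O(n^{-(\nu-1)/\nu})$.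 Hypothesis (H$_G$), the genus expansion: there is a neighborhood $U$ of $1$ such that for each $\alpha\in U$ and each integer $m\ge0$ there exist $K_{1,m}(\alpha)$ and $n_0$ such that, for all $n\ge n_0$ and all $r>0$, $$\Big|x_{n,n/\alpha,r}-\alpha\sum_{g=0}^m\frac{Z_g(\alpha^{\nu-1}r)}{n^{2g}}\Big|<\frac{K_{1,m}(\alpha)}{n^{2m+2}}.$$ *)

From HB Require Import structures.
From mathcomp Require Import all_boot all_order all_algebra.
From mathcomp Require Import all_classical all_reals all_analysis.
Set Implicit Arguments. Unset Strict Implicit. Unset Printing Implicit Defensive.
Import Order.TTheory GRing.Theory Num.Theory.
Import numFieldNormedType.Exports.
Local Open Scope classical_set_scope.
Local Open Scope ring_scope.

Section Defs.
Variable R : realType.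

Definition weight (nu : nat) (N r t : R) : R :=
  expR (- (N * (t ^+ 2 / 2 + r * t ^+ (2 * nu) / (2 * nu)%:R))).

Definition is_rec_coeff (nu : nat) (x : nat -> R -> R -> R) : Prop :=
  forall N r : R, 0 < N -> 0 < r ->
  exists pi : nat -> {poly R},
    (forall k, pi k \is monic /\ size (pi k) = k.+1) /\
    (forall j k, j != k ->
       (\int[@lebesgue_measure R]_t
          ((pi j).[t] * (pi k).[t] * weight nu N r t)%:E = 0)%E) /\
    (forall n, (0 < n)%N -> 'X * pi n = pi n.+1 + x n N r *: pi n.-1).

Definition cnu (nu : nat) : R := ('C(2 * nu - 1, nu - 1))%:R.

Definition Z0 (nu : nat) (y : R) : R :=
  xget 1 [set z : R | 0 < z <= 1 /\ 1 = z + cnu nu * y * z ^+ nu].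

(* Z_g(y), with P g standing for P_{3g-2,nu} *)
Definition Zg (nu : nat) (P : nat -> {poly R}) (g : nat) (y : R) : R :=
  if g is 0 then Z0 nu y
  else Z0 nu y * (Z0 nu y - 1) * (P g).[Z0 nu y] /
       (nu%:R - (nu - 1)%:R * Z0 nu y) ^+ (5 * g - 1).

Definition genus_expansion (nu : nat) (x : nat -> R -> R -> R)
    (P : nat -> {poly R}) (U : set R) : Prop :=
  forall a, U a -> forall m : nat,
  exists K : R, exists n0 : nat, forall n : nat, (n0 <= n)%N ->
  forall r : R, 0 < r ->
    `| x n (n%:R / a) r
       - a * \sum_(g < m.+1) Zg nu P g (a ^+ (nu - 1) * r) / n%:R ^+ (2 * g) |
    < K / n%:R ^+ (2 * m + 2).

End Defs.

(** From (H_G) at order [m + 1] with [r = n^(nu-1)/xi], the order-[m] sum differs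
    from [x] by the extra term [a Z_(m+1)(gamma n^(nu-1)) / n^(2m+2)] plus
    [O(n^-(2m+4))].  Since [Z_g = Z_0 (Z_0 - 1) P_g(Z_0) / (nu - (nu-1) Z_0)^(5g-1)]
    with [Z_0 in (0,1]], one has [|Z_g| <= |P_g|_1 Z_0], and the root equation
    [1 = Z_0 + c_nu y Z_0^nu] gives [Z_0(y)^nu <= 1 / (c_nu y)], i.e.
    [Z_0(gamma n^(nu-1)) = O(n^-((nu-1)/nu))].  As [(nu-1)/nu <= 2], both error
    terms are [O(n^-(2m+2+(nu-1)/nu))]. *)
From HB Require Import structures.
From mathcomp Require Import all_boot all_order all_algebra.
From mathcomp Require Import all_classical all_reals all_analysis.
From mathcomp Require Import ring lra zify.
Set Implicit Arguments. Unset Strict Implicit. Unset Printing Implicit Defensive.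
Import Order.TTheory GRing.Theory Num.Theory.
Import numFieldNormedType.Exports.
Local Open Scope classical_set_scope.
Local Open Scope ring_scope.

Section PowRBounds.
Variable R : realType.

Lemma powR_le_self (t e : R) : 1 <= t -> e <= 1 -> t `^ e <= t.
Proof.
move=> t1 e1; rewrite -{2}(powRr1 (le_trans ler01 t1)).
exact: ler_powR.
Qed.

Lemma ler_root_powR (k : nat) (w B : R) : (0 < k)%N -> 0 <= w ->
  w ^+ k <= B -> w <= B `^ k%:R^-1.
Proof.
move=> k0 w0 wB.
have k0R : k%:R != 0 :> R by rewrite pnatr_eq0 -lt0n.
have -> : w = (w ^+ k) `^ k%:R^-1 by rewrite -powR_mulrn // -powRrM mulfV // powRr1.
apply: ge0_ler_powR => //; rewrite ?nnegrE ?invr_ge0 ?ler0n ?exprn_ge0 //.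
exact: le_trans (exprn_ge0 k w0) wB.
Qed.

End PowRBounds.

Section ZgBounds.
Variables (R : realType) (nu : nat).
Hypothesis nu_gt0 : (0 < nu)%N.

Definition coef_l1 (p : {poly R}) : R := \sum_(i < size p) `|p`_i|.

Lemma coef_l1_ge0 p : 0 <= coef_l1 p.
Proof. by apply: sumr_ge0 => i _; apply: normr_ge0. Qed.

Lemma horner_norm_le_l1 (p : {poly R}) z : 0 <= z <= 1 -> `|p.[z]| <= coef_l1 p.
Proof.
move=> /andP[z0 z1]; rewrite horner_coef.
apply: (le_trans (ler_norm_sum _ _ _)); apply: ler_sum => i _.
by rewrite normrM normrX (ger0_norm z0) ler_piMr // exprn_ile1.
Qed.

Lemma cnu_gt0 : 0 < cnu R nu.
Proof. by rewrite /cnu ltr0n bin_gt0; lia. Qed.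

(* [Z0] is defined by [xget 1], so the value [1] may be a junk value. *)
Lemma Z0_spec (y : R) : Z0 nu y = 1 \/
  (0 < Z0 nu y <= 1 /\ 1 = Z0 nu y + cnu R nu * y * Z0 nu y ^+ nu).
Proof. by rewrite /Z0; case: xgetP => [z _ Pz|_]; [right|left]. Qed.

Lemma Z0_range (y : R) : 0 < Z0 nu y <= 1.
Proof. by case: (Z0_spec y) => [->|[]//]; rewrite ltr01 lexx. Qed.

Lemma Zg_Z0_eq1 (P : nat -> {poly R}) g y : (0 < g)%N -> Z0 nu y = 1 -> Zg nu P g y = 0.
Proof. by case: g => // g _; rewrite /Zg => ->; rewrite subrr mulr0 !mul0r. Qed.

Lemma Zg_le_Z0 (P : nat -> {poly R}) g y : (0 < g)%N ->
  `|Zg nu P g y| <= coef_l1 (P g) * Z0 nu y.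
Proof.
case: g => // g _; rewrite /Zg.
have /andP[z0 z1] := Z0_range y; set z := Z0 nu y in z0 z1 *.
have hP : `|(P g.+1).[z]| <= coef_l1 (P g.+1).
  by apply: horner_norm_le_l1; rewrite (ltW z0) z1.
have den_ge1 : 1 <= nu%:R - (nu - 1)%:R * z.
  rewrite natrB //; have : 1 <= nu%:R :> R by rewrite ler1n.
  nra.
have den_pos : 0 < nu%:R - (nu - 1)%:R * z := lt_le_trans ltr01 den_ge1.
rewrite normf_div normrX (ger0_norm (ltW den_pos)).
rewrite ler_pdivrMr ?exprn_gt0 //.
rewrite !normrM (gtr0_norm z0) ler0_norm ?subr_le0 //.
have num_le : z * - (z - 1) * `|(P g.+1).[z]| <= coef_l1 (P g.+1) * z.
  have := normr_ge0 (P g.+1).[z]; nra.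
apply: (le_trans num_le); rewrite ler_peMr ?exprn_ege1 //.
by rewrite mulr_ge0 ?coef_l1_ge0 ?ltW.
Qed.

Lemma Z0_root_bound (y : R) : Z0 nu y != 1 ->
  0 < y /\ Z0 nu y ^+ nu <= (cnu R nu * y)^-1.
Proof.
case: (Z0_spec y) => [->|[/andP[z0 z1] root]]; first by rewrite eqxx.
move=> zn1; have zlt1 : Z0 nu y < 1 by rewrite lt_neqAle zn1 z1.
have cz_pos : 0 < cnu R nu * Z0 nu y ^+ nu by rewrite mulr_gt0 ?cnu_gt0 ?exprn_gt0.
have reorder : cnu R nu * y * Z0 nu y ^+ nu = y * (cnu R nu * Z0 nu y ^+ nu) by ring.
have y_pos : 0 < y by rewrite -(pmulr_lgt0 _ cz_pos) -reorder; lra.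
split=> //; rewrite -[_^-1]mul1r ler_pdivlMr ?mulr_gt0 ?cnu_gt0 //.
rewrite mulrC; lra.
Qed.

Lemma Z0_scaled_le (gam t : R) : 0 < t -> Z0 nu (gam * t ^+ (nu - 1)) != 1 ->
  Z0 nu (gam * t ^+ (nu - 1)) * t `^ ((nu - 1)%:R / nu%:R)
    <= ((cnu R nu * `|gam|)^-1) `^ nu%:R^-1.
Proof.
move=> t0 /Z0_root_bound[yp zb]; set z := Z0 nu _ in zb *.
have gam_pos : 0 < gam by move: yp; rewrite pmulr_lgt0 // exprn_gt0.
rewrite (gtr0_norm gam_pos); apply: ler_root_powR => //.
  by rewrite mulr_ge0 ?powR_ge0 // ltW // (andP (Z0_range _)).1.
have nuR0 : nu%:R != 0 :> R by rewrite pnatr_eq0 -lt0n.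
rewrite exprMn -[(t `^ _) ^+ nu]powR_mulrn ?powR_ge0 // -powRrM divfK //.
rewrite powR_mulrn; last exact: ltW.
by rewrite -ler_pdivlMr ?exprn_gt0 // -invfM -mulrA.
Qed.

Lemma Zg_scaled_le (P : nat -> {poly R}) g (gam t : R) : (0 < g)%N -> 0 < t ->
  `|Zg nu P g (gam * t ^+ (nu - 1))| * t `^ ((nu - 1)%:R / nu%:R)
    <= coef_l1 (P g) * ((cnu R nu * `|gam|)^-1) `^ nu%:R^-1.
Proof.
move=> g0 t0.
have [Z1|Zn1] := eqVneq (Z0 nu (gam * t ^+ (nu - 1))) 1.
  by rewrite Zg_Z0_eq1 // normr0 mul0r mulr_ge0 ?coef_l1_ge0 ?powR_ge0.
apply: (le_trans (ler_wpM2r (powR_ge0 _ _) (Zg_le_Z0 P (gam * t ^+ (nu - 1)) g0))).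
by rewrite -mulrA ler_wpM2l ?coef_l1_ge0 ?Z0_scaled_le.
Qed.

End ZgBounds.

Lemma drop_last_term (R : realType) (X a S z K C N Q e : R) :
  0 < N -> 0 < e -> e <= Q ->
  `|X - a * (S + z / N)| < K / (N * Q) -> `|z| * e <= C ->
  `|X - a * S| < (K + `|a| * C) / (N * e).
Proof.
move=> N0 e0 eQ hK hz.
have Ne_pos : 0 < N * e by rewrite mulr_gt0.
have NQ_pos : 0 < N * Q by rewrite mulr_gt0 // (lt_le_trans e0).
have K_pos : 0 < K by move: (le_lt_trans (normr_ge0 _) hK); rewrite pmulr_lgt0 ?invr_gt0.
have hKe : K / (N * Q) <= K / (N * e).
  by rewrite ler_pM2l // lef_pV2 ?posrE // ler_pM2l.
have hlast : `|a * (z / N)| <= `|a| * C / (N * e).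
  rewrite (_ : `|a * (z / N)| = `|a| * (`|z| * e) / (N * e)); last first.
    by rewrite normrM normf_div (gtr0_norm N0); field; rewrite !gt_eqF.
  by apply: ler_wpM2r; [rewrite invr_ge0 ltW | apply: ler_wpM2l].
have tri : `|X - a * S| <= `|X - a * (S + z / N)| + `|a * (z / N)|.
  by rewrite (_ : X - a * S = X - a * (S + z / N) + a * (z / N)) ?ler_normD //; ring.
rewrite mulrDl; lra.
Qed.

Theorem lemmaA2 (R : realType) (nu : nat) (hnu : (2 <= nu)%N)
  (P : nat -> {poly R}) (hP : forall g, (1 <= g)%N -> size (P g) = (3 * g - 1)%N)
  (x : nat -> R -> R -> R) (hx : is_rec_coeff nu x)
  (U : set R) (hU : nbhs (1 : R) U) (HG : genus_expansion nu x P U)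
  (a : R) (ha : U a) (xi : R) (hxi : 0 < xi) (m : nat) :
  exists K : R, exists n0 : nat, forall n : nat, (n0 <= n)%N ->
    `| x n (n%:R / a) (n%:R ^+ (nu - 1) / xi)
       - a * \sum_(g < m.+1)
               Zg nu P g ((a ^+ (nu - 1) / xi) * n%:R ^+ (nu - 1)) / n%:R ^+ (2 * g) |
    < K / (n%:R `^ ((2 * m + 2)%:R + (nu - 1)%:R / nu%:R)).
Proof.
have [K1 [n0 HK]] := HG a ha m.+1.
set gam := a ^+ (nu - 1) / xi.
exists (K1 + `|a| * (coef_l1 (P m.+1) * ((cnu R nu * `|gam|)^-1) `^ nu%:R^-1)).
exists (maxn n0 1) => n; rewrite geq_max => /andP[n0n n_pos].
have t_pos : 0 < n%:R :> R by rewrite ltr0n.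
have := HK n n0n _ (divr_gt0 (exprn_gt0 (nu - 1) t_pos) hxi).
rewrite (_ : a ^+ (nu - 1) * _ = gam * n%:R ^+ (nu - 1)); last by rewrite mulrCA mulrC.
rewrite big_ord_recr (_ : (2 * @ord_max m.+1 = 2 * m + 2)%N); last by rewrite /=; lia.
rewrite [n%:R ^+ (2 * m + 2 + 2)]exprD powRD; last by rewrite gt_eqF ?implybT.
rewrite powR_mulrn; last exact: ltW.
move=> hK.
apply: (drop_last_term (exprn_gt0 _ t_pos) (powR_gt0 _ t_pos) _ hK).
- apply: (le_trans (powR_le_self _ _)); rewrite ?ler1n //.
    by rewrite ler_pdivrMr ?mul1r ?ler_nat ?leq_subr // ltr0n; lia.
  by rewrite expr2 ler_peMl ?ler1n ?ltW.
- by apply: Zg_scaled_le => //; lia.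
Qed.
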